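(* Let $(X,d)$ be a metric space, $\mu$ a non-atomic Borel measure on $X$, $m$ a Borel measure on $X$, $0<p<\infty$, and $E\subset X$ a Borel set with $m(E)=0$. Then $\mathrm{Mod}_p(\Gamma_E^+)=0$, where $\Gamma_E^+=\{\gamma\in\Gamma^\mu:\mu(\mathrm{Im}(\gamma)\cap E)>0\}$.
   Context: A path is a continuous map $\gamma:[a,b]\to X$; a subpath is a restriction to a subinterval, trivial if that interval is a point; $\mathrm{Im}(\gamma)=\gamma([a,b])$. $\mu$ non-atomic: $\mu(\{x\})=0$ for all $x$. $\Gamma^\mu$ is the set of all non-trivial injective paths $\gamma$ with $0<\mu(\mathrm{Im}(\tilde\gamma))<\infty$ for every non-trivial subpath $\tilde\gamma$. For Borel $g\ge0$, $\int_\gamma g:=\int_{\mathrm{Im}(\gamma)}g\,d\mu$. For $\Gamma\subset\Gamma^\mu$, $\mathrm{Mod}_p(\Gamma)=\inf\int_Xg^p\,dm$ over Borel $g:X\to[0,\infty]$ with $\int_\gamma g\ge1$ for all $\gamma\in\Gamma$. *)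

From HB Require Import structures.
From mathcomp Require Import all_boot all_order all_algebra.
From mathcomp Require Import all_classical all_reals all_analysis.
From mathcomp Require Import measurable_realfun.
Set Implicit Arguments. Unset Strict Implicit. Unset Printing Implicit Defensive.
Import Order.TTheory GRing.Theory Num.Theory.
Import numFieldNormedType.Exports.
Local Open Scope classical_set_scope.
Local Open Scope ring_scope.

(* Metric spaces equipped with a distinguished point (mathcomp-analysis
   measurable types are pointed, i.e. nonempty). *)
#[short(type="pmetricType")]
HB.structure Definition PointedMetric (K : numDomainType) :=
  { M of Pointed M & Metric K M }.

Notation Borel X := (g_sigma_algebraType (@open X)).

Section Defs.
Context {R : realType} {X : pmetricType R}.

(* A (candidate) path: a parameter interval [a,b] and a map gamma; only the
   values of gamma on [a,b] are relevant. *)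
Record path := Path { pa : R ; pb : R ; pf : R -> X }.

Definition is_path (g : path) : Prop :=
  pa g <= pb g /\ {within `[pa g, pb g], continuous (pf g)}.

Definition Im (g : path) : set (Borel X) := pf g @` `[pa g, pb g].

Definition injective_path (g : path) : Prop :=
  {in `[pa g, pb g] &, injective (pf g)}.

Definition nontrivial (g : path) : Prop := pa g < pb g.

Definition subpath (g : path) (c d : R) : path := Path c d (pf g).

Definition Gamma_mu (mu : {measure set (Borel X) -> \bar R}) : set path :=
  [set g | is_path g /\ nontrivial g /\ injective_path g /\
     forall c d, pa g <= c -> c < d -> d <= pb g ->
       (0 < mu (Im (subpath g c d)))%E /\ (mu (Im (subpath g c d)) < +oo)%E].

Definition line_int (mu : {measure set (Borel X) -> \bar R}) (g : path)
  (rho : Borel X -> \bar R) : \bar R :=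
  (\int[mu]_(x in Im g) rho x)%E.

Definition admissible (mu : {measure set (Borel X) -> \bar R}) (G : set path)
  (rho : Borel X -> \bar R) : Prop :=
  measurable_fun (setT : set (Borel X)) rho /\ (forall x, 0 <= rho x)%E /\
  (forall g, G g -> 1 <= line_int mu g rho)%E.

Definition Mod (p : R) (mu m : {measure set (Borel X) -> \bar R}) (G : set path)
  : \bar R :=
  ereal_inf [set (\int[m]_x (poweR (rho x) p))%E | rho in admissible mu G].

Definition non_atomic (mu : {measure set (Borel X) -> \bar R}) : Prop :=
  forall x : Borel X, mu [set x] = 0%E.

Definition Gamma_E_plus (mu : {measure set (Borel X) -> \bar R}) (E : set (Borel X))
  : set path :=
  [set g | Gamma_mu mu g /\ (0 < mu (Im g `&` E))%E].

End Defs.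

From Pilot Require Import Defs.
From HB Require Import structures.
From mathcomp Require Import all_boot all_order all_algebra.
From mathcomp Require Import all_classical all_reals all_analysis.
From mathcomp Require Import measurable_realfun.
Import Order.TTheory GRing.Theory Num.Theory.
Import numFieldNormedType.Exports.
Local Open Scope classical_set_scope.
Local Open Scope ring_scope.

(* The function equal to +oo on E and 0 elsewhere is admissible for every
   path meeting E in positive mu-measure, because its integral over such a
   path is +oo * mu(Im gamma & E) = +oo. Its p-th power is itself, and it
   vanishes m-almost everywhere since m E = 0, so its p-energy is 0. *)

Section infty_on.
Context {d : measure_display} {T : measurableType d} {R : realType}.
Local Open Scope ereal_scope.

Definition infty_on (E : set T) (x : T) : \bar R := if x \in E then +oo else 0.

Lemma measurable_fun_mem (E : set T) :
  measurable E -> measurable_fun setT (fun x => x \in E).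
Proof.
move=> mE; apply: (measurable_fun_bool true).
suff -> : setT `&` (fun x => x \in E) @^-1` [set true] = E by [].
by rewrite setTI; apply/seteqP; split => x /=; [move/set_mem|move/mem_set].
Qed.

Lemma measurable_infty_on (E : set T) :
  measurable E -> measurable_fun setT (infty_on E).
Proof.
by move=> mE; apply: measurable_fun_ifT; [exact: measurable_fun_mem|exact: measurable_cst..].
Qed.

Lemma infty_on_ge0 (E : set T) x : 0 <= infty_on E x.
Proof. by rewrite /infty_on; case: ifP. Qed.

Lemma poweR_infty_on (E : set T) (p : R) x :
  (0 < p)%R -> poweR (infty_on E x) p = infty_on E x.
Proof.
move=> /gt_eqF/negbT p0; rewrite /infty_on.
by case: ifP => _; rewrite ?poweRyr ?poweR0r.
Qed.

Lemma integral_infty_on_null (m : {measure set T -> \bar R}) (E : set T) :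
  measurable E -> m E = 0 -> \int[m]_x infty_on E x = 0.
Proof.
move=> mE mE0.
have infty_on_ae0 : ae_eq m setT (infty_on E) (cst 0).
  exists E; split => // x /= neq; apply/set_mem/negPn/negP => Ex.
  by apply: neq => _; rewrite /infty_on (negbTE Ex).
rewrite (ge0_ae_eq_integral _ _ _ _ _ infty_on_ae0) ?integral0 //.
- exact: measurable_infty_on.
- by move=> x _; exact: infty_on_ge0.
Qed.

Lemma integral_infty_on (mu : {measure set T -> \bar R}) (D E : set T) :
  measurable D -> measurable E -> 0 < mu (D `&` E) ->
  \int[mu]_(x in D) infty_on E x = +oo.
Proof.
move=> mD mE DE_gt0; apply/eqP; rewrite eq_le leey /=.
have mDE : measurable (D `&` E) by exact: measurableI.
have <- : \int[mu]_(x in D `&` E) infty_on E x = +oo.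
  rewrite (eq_integral (cst +oo)); last first.
    by move=> x /set_mem [_ Ex]; rewrite /infty_on (mem_set Ex).
  by rewrite integral_cst // gt0_mulye.
apply: ge0_subset_integral => //; last by move=> x _; exact: infty_on_ge0.
exact: measurable_funS measurableT (@subsetT _ D) (measurable_infty_on E mE).
Qed.

End infty_on.

Section modulus.
Context {R : realType} {X : pmetricType R}.
Implicit Types (mu m : {measure set (Borel X) -> \bar R}) (G : set (@Defs.path R X)).

Lemma Borel_closed_measurable (A : set X) : closed A -> measurable (A : set (Borel X)).
Proof.
move/closed_openC => oAC; rewrite -[A]setCK.
by apply: measurableC; exact: sub_gen_smallest.
Qed.

Lemma Im_closed (g : @Defs.path R X) : is_path g -> closed (Defs.Im g : set X).
Proof.
move=> [_ cg]; apply: compact_closed; first exact: metric_hausdorff.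
by apply: continuous_compact => //; exact: segment_compact.
Qed.

Lemma Im_measurable (g : @Defs.path R X) : is_path g -> measurable (Defs.Im g).
Proof. by move/Im_closed/Borel_closed_measurable. Qed.

Lemma admissible_infty_on mu (E : set (Borel X)) :
  measurable E -> admissible mu (Gamma_E_plus mu E) (infty_on E).
Proof.
move=> mE; split; first exact: measurable_infty_on E mE.
split=> [x|g [[pg _] ImE_gt0]]; first exact: infty_on_ge0.
by rewrite /line_int integral_infty_on ?leey //; exact: Im_measurable.
Qed.

Lemma Mod_le_energy (p : R) mu m G rho :
  admissible mu G rho -> (Mod p mu m G <= \int[m]_x poweR (rho x) p)%E.
Proof. by move=> adm; apply: ereal_inf_lbound; exists rho. Qed.

Lemma Mod_ge0 (p : R) mu m G : (0 <= Mod p mu m G)%E.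
Proof.
apply: le_ereal_inf_tmp => _ [rho _ <-].
by apply: integral_ge0 => x _; exact: poweR_ge0.
Qed.

End modulus.
Theorem lemma3p4 (R : realType) (X : pmetricType R)
  (mu m : {measure set (Borel X) -> \bar R}) (p : R) (E : set (Borel X)) :
  non_atomic mu -> 0 < p -> measurable E -> m E = 0%E ->
  Mod p mu m (Gamma_E_plus mu E) = 0%E.
Proof.
move=> _ p_gt0 mE mE0; apply/eqP; rewrite eq_le Mod_ge0 andbT.
have <- : (\int[m]_x poweR (infty_on E x) p = 0)%E.
  under eq_integral => x _ do rewrite poweR_infty_on //.
  exact: integral_infty_on_null.
exact: Mod_le_energy (admissible_infty_on mu E mE).
Qed.
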